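(* Let $G$ be a group generated by a finite symmetric set $X$ and hyperbolic relative to a finite collection of subgroups $\{H_\lambda\}_{\lambda\in\Lambda}$; let $\mathcal H=\bigsqcup_\lambda(H_\lambda\setminus\{1\})$ and $\Gamma=\Gamma(G,X\cup\mathcal H)$. Let $L>0$ be a constant such that for every cycle $q$ in $\Gamma$, every $\lambda\in\Lambda$ and every set of isolated $H_\lambda$-components $p_1,\dots,p_k$ of $q$, one has $\sum_{i=1}^k d_X((p_i)_-,(p_i)_+)\le L\,l(q)$. Let $s\ge 0$ and let $\epsilon\ge 0$ be a constant such that: whenever $p_1,p_2$ are geodesics in $\Gamma$ with $\max\{d_X((p_1)_-,(p_2)_-),d_X((p_1)_+,(p_2)_+)\}\le s$ and $c$ is a component of $p_1$ with $d_X(c_-,c_+)\ge\epsilon$, there is a component of $p_2$ connected to $c$. Now let $p_1=q_1e_1$ and $p_2=q_2e_2$ be geodesics in $\Gamma$ (with $e_1,e_2$ their last edges) such that $\max\{d_X((p_1)_-,(p_2)_-),d_X((p_1)_+,(p_2)_+)\}\le s$, and suppose that for some $\lambda\in\Lambda$, $e_1$ and $e_2$ are $H_\lambda$-components of $p_1$ and $p_2$ respectively with $d_X((e_i)_-,(e_i)_+)\ge\max\{\epsilon,2L(s+1)\}$ for $i=1,2$. Then $e_1$ and $e_2$ are connected.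
   Context: Relative hyperbolicity: with $F=(\ast_\lambda H_\lambda)\ast F(X)$ and $\varepsilon:F\to G$ the natural map, $G$ is hyperbolic relative to $\{H_\lambda\}$ if $\ker\varepsilon$ is the normal closure of a finite set $\mathcal R$ and there is $C>0$ such that every word $W$ over $X\cup\mathcal H$ representing $1$ in $G$ can be written in $F$ as a product of at most $C\|W\|$ conjugates of elements of $\mathcal R^{\pm1}$. The Cayley graph $\Gamma(G,\mathcal A)$ has vertex set $G$ and an edge labelled $a$ from $g$ to $ga$ for each $g\in G$, $a\in\mathcal A$; paths have origin $p_-$, terminus $p_+$, length $l(p)$ (number of edges). $d_X$ and $d_{X\cup\mathcal H}$ denote the word metrics for $X$ and $X\cup\mathcal H$. For a path $q$ in $\Gamma$, a subpath $p$ is an $H_\lambda$-component of $q$ if its label is a word in $H_\lambda\setminus\{1\}$ and $p$ is not contained in a longer subpath of $q$ with this property. Two components $p_1,p_2$ (of the same or different paths) are connected if they are $H_\lambda$-components for the same $\lambda$ and all their vertices lie in a common left coset $gH_\lambda$. An $H_\lambda$-component of $q$ is isolated if no other $H_\lambda$-component of $q$ is connected to it. *)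

From Stdlib Require Import Reals List Arith ClassicalEpsilon.
Import ListNotations.
Set Implicit Arguments.
Unset Strict Implicit.
Open Scope R_scope.

Record Group := {
  gcar :> Type;
  gmul : gcar -> gcar -> gcar;
  gone : gcar;
  ginv : gcar -> gcar;
  gmulA : forall x y z, gmul x (gmul y z) = gmul (gmul x y) z;
  gmul1 : forall x, gmul gone x = x;
  gmulV : forall x, gmul (ginv x) x = gone
}.
Arguments gone {_}.
Arguments gmul {_}.
Arguments ginv {_}.

Section Defs.
Variable G : Group.
Variable Lam : Type.

Definition is_subgroup (P : G -> Prop) : Prop :=
  P gone /\ (forall x y, P x -> P y -> P (gmul x y)) /\ (forall x, P x -> P (ginv x)).

Definition gprod (w : list G) : G := fold_right (fun a acc => gmul a acc) gone w.

Definition finite_pred (A : Type) (P : A -> Prop) : Prop :=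
  exists l : list A, forall a, P a -> In a l.
Definition symmetric_set (X : G -> Prop) : Prop := forall x, X x -> X (ginv x).
Definition generates (X : G -> Prop) : Prop :=
  forall g : G, exists w : list G, Forall X w /\ gprod w = g.

(** Letters of the alphabet X ⊔ ℋ, ℋ = ⊔_λ (H_λ \ {1}) (tagged by λ). *)
Inductive letter := XL (x : G) | HL (l : Lam) (h : G).

Definition valid_letter (X : G -> Prop) (H : Lam -> G -> Prop) (a : letter) : Prop :=
  match a with XL x => X x | HL l h => H l h /\ h <> gone end.
Definition eval_letter (a : letter) : G := match a with XL x => x | HL _ h => h end.
Definition eval_word (w : list letter) : G :=
  fold_right (fun a acc => gmul (eval_letter a) acc) gone w.

(** Letters for F = ( *_λ H_λ ) * F(X): basis letters of F(X) with exponent ±1,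
    and elements of the H_λ (tagged by λ). *)
Inductive fletter := FX (x : G) (pos : bool) | FH (l : Lam) (h : G).

Definition valid_fletter (X : G -> Prop) (H : Lam -> G -> Prop) (a : fletter) : Prop :=
  match a with FX x _ => X x | FH l h => H l h end.
Definition feval_letter (a : fletter) : G :=
  match a with FX x true => x | FX x false => ginv x | FH _ h => h end.
Definition feval (w : list fletter) : G :=
  fold_right (fun a acc => gmul (feval_letter a) acc) gone w.

Definition finv_letter (a : fletter) : fletter :=
  match a with FX x b => FX x (negb b) | FH l h => FH l (ginv h) end.
Definition finv (w : list fletter) : list fletter := rev (map finv_letter w).

(** Equality in the free product F, as words modulo the defining moves. *)
Inductive feq : list fletter -> list fletter -> Prop :=
| feq_refl w : feq w w
| feq_sym u v : feq u v -> feq v u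
| feq_trans u v w : feq u v -> feq v w -> feq u w
| feq_ctx a b u v : feq u v -> feq (a ++ u ++ b) (a ++ v ++ b)
| feq_free x bo : feq [FX x bo; FX x (negb bo)] []
| feq_merge l h h' : feq [FH l h; FH l h'] [FH l (gmul h h')]
| feq_unit l : feq [FH l gone] [].

Definition embed_letter (a : letter) : fletter :=
  match a with XL x => FX x true | HL l h => FH l h end.

Definition conj_word (c : list fletter * list fletter * bool) : list fletter :=
  let '(f, r, b) := c in f ++ (if b then r else finv r) ++ finv f.
Definition prod_conj (cs : list (list fletter * list fletter * bool)) : list fletter :=
  flat_map conj_word cs.

Definition conjs_ok X H (Rel : list (list fletter))
  (cs : list (list fletter * list fletter * bool)) : Prop :=
  forall f r b, In (f, r, b) cs -> In r Rel /\ Forall (valid_fletter X H) f.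

(** Osin's definition of relative hyperbolicity (finite relative presentation
    with linear relative Dehn function). *)
Definition rel_hyperbolic (X : G -> Prop) (H : Lam -> G -> Prop) : Prop :=
  exists Rel : list (list fletter),
    (forall r, In r Rel -> Forall (valid_fletter X H) r /\ feval r = gone) /\
    (forall w, Forall (valid_fletter X H) w -> feval w = gone ->
       exists cs, conjs_ok X H Rel cs /\ feq w (prod_conj cs)) /\
    (exists C : R, 0 < C /\
       forall W : list letter, Forall (valid_letter X H) W -> eval_word W = gone ->
         exists cs, conjs_ok X H Rel cs /\
           INR (length cs) <= C * INR (length W) /\
           feq (map embed_letter W) (prod_conj cs)).

Definition dX_le (X : G -> Prop) (a b : G) (n : nat) : Prop :=
  exists w : list G, Forall X w /\ (length w <= n)%nat /\ gmul a (gprod w) = b.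
Definition is_dX X a b n : Prop :=
  dX_le X a b n /\ forall m, dX_le X a b m -> (n <= m)%nat.
Definition dX (X : G -> Prop) (a b : G) : nat :=
  match excluded_middle_informative (exists n, is_dX X a b n) with
  | left h => proj1_sig (constructive_indefinite_description _ h)
  | right _ => 0%nat
  end.

(** Paths in Γ(G, X ∪ ℋ): start vertex and list of edge labels. *)
Record path := { pstart : G; plab : list letter }.

Definition plen (p : path) : nat := length (plab p).
Definition vertex (p : path) (k : nat) : G := gmul (pstart p) (eval_word (firstn k (plab p))).
Definition pend (p : path) : G := vertex p (plen p).
Definition valid_path X H (p : path) : Prop := Forall (valid_letter X H) (plab p).
Definition is_cycle X H (p : path) : Prop := valid_path X H p /\ pend p = pstart p.
Definition geodesic X H (p : path) : Prop :=
  valid_path X H p /\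
  forall p', valid_path X H p' -> pstart p' = pstart p -> pend p' = pend p ->
    (plen p <= plen p')%nat.

Definition has_HL (p : path) (l : Lam) (k : nat) : Prop :=
  exists h, nth_error (plab p) k = Some (HL l h).

Definition is_component (p : path) (l : Lam) (i j : nat) : Prop :=
  (i < j)%nat /\ (j <= plen p)%nat /\
  (forall k, (i <= k < j)%nat -> has_HL p l k) /\
  (i = 0%nat \/ ~ has_HL p l (i - 1)) /\
  ~ has_HL p l j.

(** Connected H_λ-components: all vertices in a common left coset gH_λ. *)
Definition connected (H : Lam -> G -> Prop) (l : Lam)
  (p1 : path) (i1 j1 : nat) (p2 : path) (i2 j2 : nat) : Prop :=
  is_component p1 l i1 j1 /\ is_component p2 l i2 j2 /\
  exists g : G,
    (forall k, (i1 <= k <= j1)%nat -> H l (gmul (ginv g) (vertex p1 k))) /\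
    (forall k, (i2 <= k <= j2)%nat -> H l (gmul (ginv g) (vertex p2 k))).

Definition isolated H (l : Lam) (q : path) (i j : nat) : Prop :=
  is_component q l i j /\
  forall i' j', is_component q l i' j' -> (i', j') <> (i, j) ->
    ~ connected H l q i j q i' j'.

Definition sum_dX X (q : path) (cs : list (nat * nat)) : R :=
  fold_right (fun c acc => INR (dX X (vertex q (fst c)) (vertex q (snd c))) + acc) 0 cs.

End Defs.

(** Suppose the last edges [e1], [e2] are not connected.  By the choice of
    [eps], [e1] is connected to some other component [c] of [p2], so [c] and
    [P := (p1)_+] lie in one coset of [H_λ]; as [p2] is geodesic, [c] ends at
    least two edges before [(p2)_+] and starts at most [1 + d_X(P, (p2)_+)]
    edges before it.  One [H_λ]-edge from [P] to the end of [c], the rest of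
    [p2], and an [X]-geodesic back to [P] form a cycle of length at most
    [1 + 2s] in which [e2] is isolated: a component connected to [e2] would
    either shorten [p2] or put [P] into the coset of [e2], connecting [e1]
    and [e2].  Hence [d_X(e2) <= L (1 + 2s) < 2L(s+1)].  Relative
    hyperbolicity itself enters only through the constants [L] and [eps]. *)

From Stdlib Require Import Reals List Arith Lia Lra Classical ClassicalEpsilon.
Import ListNotations.
Local Open Scope nat_scope.

Section GroupFacts.
Context {G : Group}.
Implicit Types a b c x y : G.

Lemma gmul_inv_r x : gmul x (ginv x) = gone.
Proof.
  rewrite <- (gmul1 (gmul x (ginv x))), <- (gmulV (ginv x)) at 1.
  rewrite <- gmulA, (gmulA (ginv x) x), gmulV, gmul1.
  apply gmulV.
Qed.

Lemma gmul_one_r x : gmul x gone = x.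
Proof. rewrite <- (gmulV x), gmulA, gmul_inv_r, gmul1. reflexivity. Qed.

Lemma gmul_cancel_l a x y : gmul a x = gmul a y -> x = y.
Proof.
  intro E. rewrite <- (gmul1 x), <- (gmul1 y), <- (gmulV a), <- !gmulA, E.
  reflexivity.
Qed.

Lemma ginv_involutive x : ginv (ginv x) = x.
Proof. apply (gmul_cancel_l (ginv x)). rewrite gmul_inv_r, gmulV. reflexivity. Qed.

Lemma ginv_mul x y : ginv (gmul x y) = gmul (ginv y) (ginv x).
Proof.
  apply (gmul_cancel_l (gmul x y)).
  rewrite gmul_inv_r, <- gmulA, (gmulA y), gmul_inv_r, gmul1, gmul_inv_r.
  reflexivity.
Qed.

Lemma ginv_one : ginv (@gone G) = gone.
Proof. rewrite <- (gmul1 (ginv gone)). apply gmul_inv_r. Qed.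

Lemma gmul_inv_cancel_l a b : gmul a (gmul (ginv a) b) = b.
Proof. rewrite gmulA, gmul_inv_r, gmul1. reflexivity. Qed.

Lemma gprod_app (u v : list G) : gprod (u ++ v) = gmul (gprod u) (gprod v).
Proof.
  induction u as [|x u IH]; simpl.
  - rewrite gmul1. reflexivity.
  - rewrite IH, gmulA. reflexivity.
Qed.

Lemma gprod_rev_inv (w : list G) : gprod (rev (map ginv w)) = ginv (gprod w).
Proof.
  induction w as [|x w IH]; simpl.
  - symmetry. apply ginv_one.
  - rewrite gprod_app, IH, ginv_mul. simpl. rewrite gmul_one_r. reflexivity.
Qed.

Definition same_lcoset (P : G -> Prop) (a b : G) : Prop := P (gmul (ginv a) b).

Context {P : G -> Prop} (P_subgroup : is_subgroup P).

Lemma same_lcoset_refl a : same_lcoset P a a.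
Proof. unfold same_lcoset. rewrite gmulV. apply P_subgroup. Qed.

Lemma same_lcoset_sym a b : same_lcoset P a b -> same_lcoset P b a.
Proof.
  unfold same_lcoset. intro Hab. destruct P_subgroup as [_ [_ Pinv]].
  apply Pinv in Hab. rewrite ginv_mul, ginv_involutive in Hab. exact Hab.
Qed.

Lemma same_lcoset_trans a b c :
  same_lcoset P a b -> same_lcoset P b c -> same_lcoset P a c.
Proof.
  unfold same_lcoset. intros Hab Hbc. destruct P_subgroup as [_ [Pmul _]].
  pose proof (Pmul _ _ Hab Hbc) as Hac.
  rewrite <- gmulA, gmul_inv_cancel_l in Hac. exact Hac.
Qed.

End GroupFacts.

Section WordMetric.
Context {G : Group} {X : G -> Prop} (X_generates : generates X).

Lemma dX_attained a b : dX_le X a b (dX X a b).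
Proof.
  assert (Hex : exists n, is_dX X a b n).
  { destruct (dec_inh_nat_subset_has_unique_least_element (dX_le X a b))
      as [n [[Hn Hmin] _]].
    - intro n. apply classic.
    - destruct (X_generates (gmul (ginv a) b)) as [w [Hw Ew]].
      exists (length w), w. rewrite Ew, gmul_inv_cancel_l. auto.
    - exists n. split; assumption. }
  unfold dX. destruct (excluded_middle_informative _) as [h|h]; [|contradiction].
  exact (proj1 (proj2_sig (constructive_indefinite_description _ h))).
Qed.

Lemma dX_le_sym (X_symmetric : symmetric_set X) a b n :
  dX_le X a b n -> dX_le X b a n.
Proof.
  intros [w [Hw [Hlen Ew]]]. exists (rev (map ginv w)). repeat split.
  - apply Forall_rev, Forall_map. exact (Forall_impl _ X_symmetric Hw).
  - rewrite length_rev, length_map. exact Hlen.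
  - rewrite gprod_rev_inv, <- Ew, <- gmulA, gmul_inv_r, gmul_one_r. reflexivity.
Qed.

End WordMetric.

Lemma firstn_S_nth_error {A : Type} (l : list A) k a :
  nth_error l k = Some a -> firstn (S k) l = firstn k l ++ [a].
Proof.
  revert l. induction k as [|k IH]; intros [|b l] Ha; simpl in *; try discriminate.
  - injection Ha as ->. reflexivity.
  - rewrite (IH l Ha). reflexivity.
Qed.

Lemma firstn_add {A : Type} j k (l : list A) :
  firstn (j + k) l = firstn j l ++ firstn k (skipn j l).
Proof.
  revert l. induction j as [|j IH]; intros [|a l]; simpl; try reflexivity.
  - destruct k; reflexivity.
  - rewrite IH. reflexivity.
Qed.

Lemma Forall_firstn_skipn {A : Type} {P : A -> Prop} (n : nat) {l : list A} :
  Forall P l -> Forall P (firstn n l) /\ Forall P (skipn n l).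
Proof. intro Hl. rewrite <- (firstn_skipn n l) in Hl. apply Forall_app in Hl. exact Hl. Qed.

Section Paths.
Context {G : Group} {Lam : Type}.
Implicit Types (p q : path G Lam) (u v : list (letter G Lam)).

Lemma eval_word_app u v : eval_word (u ++ v) = gmul (eval_word u) (eval_word v).
Proof.
  induction u as [|a u IH]; simpl.
  - rewrite gmul1. reflexivity.
  - rewrite IH, gmulA. reflexivity.
Qed.

Lemma eval_word_XL (w : list G) : eval_word (map (XL Lam) w) = gprod w.
Proof. induction w as [|x w IH]; simpl; congruence. Qed.

Lemma vertex_0 p : vertex p 0 = pstart p.
Proof. apply gmul_one_r. Qed.

Lemma vertex_S p k a :
  nth_error (plab p) k = Some a -> vertex p (S k) = gmul (vertex p k) (eval_letter a).
Proof.
  intro Ha. unfold vertex.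
  rewrite (firstn_S_nth_error _ _ _ Ha), eval_word_app, <- gmulA. simpl.
  rewrite gmul_one_r. reflexivity.
Qed.

Lemma pend_eval p : pend p = gmul (pstart p) (eval_word (plab p)).
Proof. unfold pend, vertex, plen. rewrite firstn_all. reflexivity. Qed.

Lemma pend_vertex_skipn p j : pend p = gmul (vertex p j) (eval_word (skipn j (plab p))).
Proof.
  rewrite pend_eval. unfold vertex.
  rewrite <- gmulA, <- eval_word_app, firstn_skipn. reflexivity.
Qed.

Lemma vertex_app s u v k :
  vertex {| pstart := s; plab := u ++ v |} (length u + k)
  = vertex {| pstart := gmul s (eval_word u); plab := v |} k.
Proof. unfold vertex; simpl. rewrite firstn_app_2, eval_word_app, gmulA. reflexivity. Qed.

Lemma vertex_app_l s u v k :
  k <= length u ->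
  vertex {| pstart := s; plab := u ++ v |} k = vertex {| pstart := s; plab := u |} k.
Proof.
  intro Hk. unfold vertex; simpl.
  rewrite firstn_app, (proj2 (Nat.sub_0_le _ _) Hk), app_nil_r. reflexivity.
Qed.

Lemma vertex_skipn p j k :
  vertex {| pstart := vertex p j; plab := skipn j (plab p) |} k = vertex p (j + k).
Proof.
  unfold vertex; simpl.
  rewrite firstn_add, eval_word_app, gmulA. reflexivity.
Qed.

(** Empty when [h = 1], since [1] is not a letter of [ℋ]. *)
Definition h_word (l : Lam) (h : G) : list (letter G Lam) :=
  if excluded_middle_informative (h = gone) then [] else [HL l h].

Lemma h_word_length l h : length (h_word l h) <= 1.
Proof. unfold h_word. destruct (excluded_middle_informative _); simpl; lia. Qed.

Lemma h_word_eval l h : eval_word (h_word l h) = h.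
Proof.
  unfold h_word. destruct (excluded_middle_informative _) as [->|_]; simpl.
  - reflexivity.
  - apply gmul_one_r.
Qed.

Lemma h_word_valid X (H : Lam -> G -> Prop) l h :
  H l h -> Forall (valid_letter X H) (h_word l h).
Proof.
  intro Hh. unfold h_word.
  destruct (excluded_middle_informative _); repeat constructor; assumption.
Qed.

End Paths.

Section Geodesics.
Context {G : Group} {X : G -> Prop} {Lam : Type} {H : Lam -> G -> Prop}.
Implicit Types (p q : path G Lam).

Lemma geodesic_segment_le p t v u :
  geodesic X H p -> t <= v <= plen p -> Forall (valid_letter X H) u ->
  gmul (vertex p t) (eval_word u) = vertex p v -> v - t <= length u.
Proof.
  intros [Hp Hmin] Htv Hu Ev.
  set (p' := {| pstart := pstart p; plab := firstn t (plab p) ++ u ++ skipn v (plab p) |}).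
  assert (Hlen : plen p <= plen p').
  { apply Hmin; [|reflexivity|].
    - destruct (Forall_firstn_skipn t Hp) as [Ht _].
      destruct (Forall_firstn_skipn v Hp) as [_ Hv].
      apply Forall_app; split; [|apply Forall_app; split]; assumption.
    - rewrite pend_eval. simpl. rewrite !eval_word_app, !gmulA.
      change (gmul (pstart p) (eval_word (firstn t (plab p)))) with (vertex p t).
      rewrite Ev, <- pend_vertex_skipn. reflexivity. }
  unfold plen in *; simpl in Hlen.
  rewrite !length_app, length_firstn, length_skipn in Hlen. lia.
Qed.

Variable l : Lam.
Hypothesis H_subgroup : is_subgroup (H l).

Lemma geodesic_lcoset_gap p t v :
  geodesic X H p -> t <= v <= plen p ->
  same_lcoset (H l) (vertex p t) (vertex p v) -> v <= S t.
Proof.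
  intros Hp Htv Htv_co.
  pose proof (h_word_length l (gmul (ginv (vertex p t)) (vertex p v))).
  enough (v - t <= length (h_word l (gmul (ginv (vertex p t)) (vertex p v)))) by lia.
  apply (geodesic_segment_le p); [assumption|assumption| |].
  - apply h_word_valid. exact Htv_co.
  - rewrite h_word_eval. apply gmul_inv_cancel_l.
Qed.

Lemma geodesic_lcoset_suffix p t P :
  generates X -> geodesic X H p -> t <= plen p ->
  same_lcoset (H l) (vertex p t) P -> plen p - t <= S (dX X P (pend p)).
Proof.
  intros Xgen Hp Ht HtP.
  destruct (dX_attained Xgen P (pend p)) as [w [Hw [Hlen Ew]]].
  set (u := h_word l (gmul (ginv (vertex p t)) P) ++ map (XL Lam) w).
  assert (Hu : length u <= S (dX X P (pend p))).
  { unfold u. rewrite length_app, length_map.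
    pose proof (h_word_length l (gmul (ginv (vertex p t)) P)). lia. }
  enough (plen p - t <= length u) by lia.
  apply (geodesic_segment_le p); [assumption|lia| |].
  - apply Forall_app. split.
    + apply h_word_valid. exact HtP.
    + apply Forall_map. exact Hw.
  - unfold u. rewrite eval_word_app, h_word_eval, eval_word_XL, gmulA, gmul_inv_cancel_l.
    exact Ew.
Qed.

Lemma has_HL_lt p k : has_HL p l k -> k < plen p.
Proof. intros [h Hk]. apply nth_error_Some. rewrite Hk. discriminate. Qed.

Lemma lcoset_HL_edge p k :
  valid_path X H p -> has_HL p l k -> same_lcoset (H l) (vertex p k) (vertex p (S k)).
Proof.
  intros Hp [h Hk]. unfold same_lcoset.
  rewrite (vertex_S _ _ _ Hk). simpl. rewrite gmulA, gmulV, gmul1.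
  apply nth_error_In in Hk. exact (proj1 (proj1 (Forall_forall _ _) Hp _ Hk)).
Qed.

Lemma last_edge_lcoset p k :
  valid_path X H p -> is_component p l (plen p - 1) (plen p) ->
  plen p - 1 <= k <= plen p -> same_lcoset (H l) (pend p) (vertex p k).
Proof.
  intros Hp [Hn [_ [HHL _]]] Hk.
  destruct (Nat.eq_dec k (plen p)) as [->|Hkn].
  - apply same_lcoset_refl. exact H_subgroup.
  - apply same_lcoset_sym; [exact H_subgroup|].
    replace k with (plen p - 1) by lia. unfold pend.
    replace (plen p) with (S (plen p - 1)) at 2 by lia.
    apply lcoset_HL_edge; [assumption|]. apply HHL. lia.
Qed.

Lemma component_before_last_HL q m i j :
  (forall k, m < k -> ~ has_HL q l k) -> is_component q l i j ->
  (i, j) <> (m, S m) -> i < m.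
Proof.
  intros Hlast [Hij [_ [HHL _]]] Hne.
  destruct (Nat.lt_trichotomy i m) as [Him|[->|Him]].
  - exact Him.
  - exfalso. destruct (Nat.eq_dec j (S m)) as [->|Hj]; [now apply Hne|].
    apply (Hlast (S m)); [lia|]. apply HHL. lia.
  - exfalso. apply (Hlast i Him). apply HHL. lia.
Qed.

Lemma component_before_last_edge p i j :
  is_component p l (plen p - 1) (plen p) -> is_component p l i j ->
  (i, j) <> (plen p - 1, plen p) -> S j < plen p.
Proof.
  intros Hlast Hc Hne.
  assert (Hi : i < plen p - 1).
  { apply (component_before_last_HL p (plen p - 1) i j); [|assumption|].
    - intros k Hk HHL. apply has_HL_lt in HHL. lia.
    - replace (S (plen p - 1)) with (plen p); [exact Hne|].
      destruct Hlast. lia. }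
  destruct Hlast as [_ [_ [HHLn [Hstart _]]]], Hc as [Hij [Hjn [HHL [_ Hend]]]].
  destruct (Nat.eq_dec j (plen p - 1)) as [Ej|Ej].
  { exfalso. apply Hend. apply HHLn. lia. }
  destruct (le_lt_dec (plen p) j) as [Ejn|Ejn]; [|lia].
  exfalso. destruct Hstart as [Hn|Hprev]; [lia|].
  apply Hprev. apply HHL. lia.
Qed.

Lemma isolated_of_lcoset q i j :
  is_component q l i j ->
  (forall i' j', is_component q l i' j' -> (i', j') <> (i, j) ->
     ~ same_lcoset (H l) (vertex q i) (vertex q i')) ->
  isolated H l q i j.
Proof.
  intros Hc Hfar. split; [exact Hc|].
  intros i' j' Hc' Hne [[Hij _] [[Hij' _] [g [Hg Hg']]]].
  apply (Hfar i' j' Hc' Hne).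
  apply (same_lcoset_trans H_subgroup _ g).
  - apply same_lcoset_sym; [exact H_subgroup|]. apply Hg. lia.
  - apply Hg'. lia.
Qed.

Lemma connected_lcoset p1 i1 j1 p2 i2 j2 k1 k2 :
  connected H l p1 i1 j1 p2 i2 j2 ->
  i1 <= k1 <= j1 -> i2 <= k2 <= j2 ->
  same_lcoset (H l) (vertex p1 k1) (vertex p2 k2).
Proof.
  intros [_ [_ [g [Hg1 Hg2]]]] Hk1 Hk2.
  apply (same_lcoset_trans H_subgroup _ g).
  - apply same_lcoset_sym; [exact H_subgroup|]. exact (Hg1 k1 Hk1).
  - exact (Hg2 k2 Hk2).
Qed.

Lemma connected_last_edges p1 p2 :
  valid_path X H p1 -> valid_path X H p2 ->
  is_component p1 l (plen p1 - 1) (plen p1) -> is_component p2 l (plen p2 - 1) (plen p2) ->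
  same_lcoset (H l) (pend p1) (pend p2) ->
  connected H l p1 (plen p1 - 1) (plen p1) p2 (plen p2 - 1) (plen p2).
Proof.
  intros Hp1 Hp2 Hc1 Hc2 Hends.
  split; [exact Hc1|]. split; [exact Hc2|].
  exists (pend p1). split; intros k Hk.
  - exact (last_edge_lcoset _ _ Hp1 Hc1 Hk).
  - exact (same_lcoset_trans H_subgroup _ _ _ Hends (last_edge_lcoset _ _ Hp2 Hc2 Hk)).
Qed.

End Geodesics.

Section Detour.
Context {G : Group} {X : G -> Prop} {Lam : Type} {H : Lam -> G -> Prop}.
Variables (l : Lam) (p : path G Lam) (P : G) (j : nat) (w : list G).

Let e := h_word l (gmul (ginv P) (vertex p j)).

Definition detour : path G Lam :=
  {| pstart := P; plab := e ++ skipn j (plab p) ++ map (XL Lam) w |}.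

Lemma detour_length : plen detour = length e + (plen p - j) + length w.
Proof. unfold detour, plen; simpl. rewrite !length_app, length_skipn, length_map. lia. Qed.

Lemma detour_vertex t :
  j <= t <= plen p -> vertex detour (length e + (t - j)) = vertex p t.
Proof.
  intro Ht. unfold detour. rewrite vertex_app, vertex_app_l.
  - unfold e. rewrite h_word_eval, gmul_inv_cancel_l, vertex_skipn.
    f_equal. lia.
  - rewrite length_skipn. unfold plen in Ht. lia.
Qed.

Lemma detour_nth_error t :
  j <= t < plen p -> nth_error (plab detour) (length e + (t - j)) = nth_error (plab p) t.
Proof.
  intro Ht. unfold detour; simpl.
  rewrite nth_error_app2, Nat.add_comm, Nat.add_sub, nth_error_app1
    by (unfold plen in Ht; rewrite ?length_skipn; lia).
  rewrite nth_error_skipn. f_equal. lia.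
Qed.

Lemma detour_no_HL_after k :
  length e + (plen p - j) <= k -> ~ has_HL detour l k.
Proof.
  intros Hk [h Hh]. unfold detour in Hh; simpl in Hh.
  rewrite app_assoc, nth_error_app2 in Hh
    by (rewrite length_app, length_skipn; unfold plen in Hk; lia).
  rewrite nth_error_map in Hh.
  destruct (nth_error w _); discriminate.
Qed.

Lemma detour_cycle :
  valid_path X H p -> Forall X w -> same_lcoset (H l) P (vertex p j) ->
  gmul (pend p) (gprod w) = P -> is_cycle X H detour.
Proof.
  intros Hp Hw HPj Ew. split.
  - apply Forall_app. split; [apply h_word_valid; exact HPj|].
    apply Forall_app. split; [exact (proj2 (Forall_firstn_skipn j Hp))|].
    apply Forall_map. exact Hw.
  - rewrite pend_eval. unfold detour; simpl.
    rewrite !eval_word_app, eval_word_XL, !gmulA.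
    unfold e. rewrite h_word_eval, gmul_inv_cancel_l, <- pend_vertex_skipn.
    exact Ew.
Qed.

Lemma detour_last_edge_isolated :
  is_subgroup (H l) -> geodesic X H p -> is_component p l (plen p - 1) (plen p) ->
  S j < plen p -> ~ same_lcoset (H l) P (pend p) ->
  isolated H l detour (length e + (plen p - 1 - j)) (S (length e + (plen p - 1 - j))).
Proof.
  intros Hsub Hgeo Hlast Hj Hfar.
  pose proof (h_word_length l (gmul (ginv P) (vertex p j))) as He. fold e in He.
  set (m := length e + (plen p - 1 - j)).
  assert (Hno : forall k, m < k -> ~ has_HL detour l k)
    by (intros k Hk; apply detour_no_HL_after; unfold m in Hk; lia).
  apply isolated_of_lcoset; [exact Hsub| |].
  - destruct Hlast as [_ [_ [HHL [Hstart _]]]].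
    split; [lia|]. split; [rewrite detour_length; unfold m; lia|]. split; [|split].
    + intros k Hk. replace k with m by lia. unfold has_HL, m.
      rewrite detour_nth_error by lia. apply HHL. lia.
    + right. replace (m - 1) with (length e + (plen p - 1 - 1 - j)) by (unfold m; lia).
      unfold has_HL. rewrite detour_nth_error by lia.
      destruct Hstart as [Hn|Hprev]; [lia|exact Hprev].
    + apply Hno. lia.
  - intros i' j' Hc' Hne Hco.
    pose proof (component_before_last_HL l detour m i' j' Hno Hc' Hne) as Hi'.
    unfold m in Hco. rewrite detour_vertex in Hco by lia.
    assert (Hend : same_lcoset (H l) (vertex p (plen p - 1)) (pend p)).
    { apply same_lcoset_sym; [exact Hsub|].
      apply (last_edge_lcoset l Hsub p (plen p - 1) (proj1 Hgeo) Hlast). lia. }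
    destruct i' as [|i'].
    + apply Hfar. rewrite vertex_0 in Hco.
      exact (same_lcoset_trans Hsub _ _ _ (same_lcoset_sym Hsub _ _ Hco) Hend).
    + replace (S i') with (length e + ((j + (S i' - length e)) - j)) in Hco by lia.
      rewrite detour_vertex in Hco by (unfold m in Hi'; lia).
      unfold m in Hi'. enough (plen p <= S (j + (S i' - length e))) by lia.
      apply (geodesic_lcoset_gap l p _ _ Hgeo); [lia|].
      exact (same_lcoset_trans Hsub _ _ _ (same_lcoset_sym Hsub _ _ Hco) Hend).
Qed.

End Detour.

Local Open Scope R_scope.

Section LastEdgeBound.
Context {G : Group} {X : G -> Prop} {Lam : Type} {H : Lam -> G -> Prop}.
Hypotheses (X_symmetric : symmetric_set X) (X_generates : generates X).
Variable L : R.
Hypothesis L_nonneg : 0 <= L.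
Hypothesis isolated_components_bound :
  forall (q : path G Lam) (l : Lam) (cs : list (nat * nat)),
    is_cycle X H q -> NoDup cs ->
    (forall c, In c cs -> isolated H l q (fst c) (snd c)) ->
    sum_dX X q cs <= L * INR (plen q).

Lemma last_edge_dX_le p l i j P :
  is_subgroup (H l) -> geodesic X H p ->
  is_component p l (plen p - 1) (plen p) -> is_component p l i j ->
  (i, j) <> (plen p - 1, plen p)%nat ->
  same_lcoset (H l) P (vertex p i) -> same_lcoset (H l) P (vertex p j) ->
  ~ same_lcoset (H l) P (pend p) ->
  INR (dX X (vertex p (plen p - 1)) (pend p)) <= L * (1 + 2 * INR (dX X P (pend p))).
Proof.
  intros Hsub Hgeo Hlast Hc Hne HPi HPj Hfar.
  set (d := dX X P (pend p)).
  assert (Hj : (S j < plen p)%nat)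
    by exact (component_before_last_edge l p i j Hlast Hc Hne).
  assert (Hij : (i < j)%nat) by apply Hc.
  assert (Hsuffix : (plen p - i <= S d)%nat).
  { apply (geodesic_lcoset_suffix l p i P X_generates Hgeo); [lia|].
    exact (same_lcoset_sym Hsub _ _ HPi). }
  destruct (dX_le_sym X_symmetric _ _ _ (dX_attained X_generates P (pend p)))
    as [w [Hw [Hwlen Ew]]].
  pose proof (h_word_length l (gmul (ginv P) (vertex p j))) as He.
  set (m := (length (h_word l (gmul (ginv P) (vertex p j))) + (plen p - 1 - j))%nat).
  set (q := detour l p P j w).
  assert (Hvm : vertex q m = vertex p (plen p - 1)) by (apply detour_vertex; lia).
  assert (HvSm : vertex q (S m) = pend p).
  { replace (S m) with (length (h_word l (gmul (ginv P) (vertex p j))) + (plen p - j))%nat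
      by (unfold m; lia).
    apply detour_vertex. lia. }
  assert (Hlen : (plen q <= 1 + 2 * d)%nat).
  { unfold q. rewrite detour_length. fold d in Hwlen. lia. }
  apply le_INR in Hlen. rewrite plus_INR, mult_INR in Hlen. simpl in Hlen.
  assert (Hbound : sum_dX X q [(m, S m)] <= L * INR (plen q)).
  { apply (isolated_components_bound q l).
    - apply detour_cycle; auto. apply Hgeo.
    - exact (NoDup_cons _ (@in_nil _ _) (NoDup_nil _)).
    - intros c [<-|[]].
      exact (detour_last_edge_isolated l p P j w Hsub Hgeo Hlast Hj Hfar). }
  unfold sum_dX in Hbound; simpl in Hbound. rewrite Hvm, HvSm in Hbound.
  apply (Rmult_le_compat_l L) in Hlen; [|exact L_nonneg]. lra.
Qed.

End LastEdgeBound.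

Theorem lemma3p1
  (G : Group) (X : G -> Prop) (Lam : Type) (H : Lam -> G -> Prop)
  (HXfin : finite_pred X) (HXsym : symmetric_set X) (HXgen : generates X)
  (HLfin : finite_pred (fun _ : Lam => True))
  (HHsub : forall l, is_subgroup (H l))
  (Hrh : rel_hyperbolic X H)
  (L s eps : R) (HL0 : 0 < L) (Hs0 : 0 <= s) (Heps0 : 0 <= eps)
  (HLprop : forall (q : path G Lam) (l : Lam) (cs : list (nat * nat)),
      is_cycle X H q -> NoDup cs ->
      (forall c, In c cs -> isolated H l q (fst c) (snd c)) ->
      sum_dX X q cs <= L * INR (plen q))
  (Heprop : forall (p1 p2 : path G Lam),
      geodesic X H p1 -> geodesic X H p2 ->
      INR (dX X (pstart p1) (pstart p2)) <= s ->
      INR (dX X (pend p1) (pend p2)) <= s ->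
      forall (l : Lam) (i j : nat), is_component p1 l i j ->
      eps <= INR (dX X (vertex p1 i) (vertex p1 j)) ->
      exists i' j', connected H l p1 i j p2 i' j')
  (p1 p2 : path G Lam) (l : Lam) :
  geodesic X H p1 -> geodesic X H p2 ->
  INR (dX X (pstart p1) (pstart p2)) <= s ->
  INR (dX X (pend p1) (pend p2)) <= s ->
  is_component p1 l (plen p1 - 1) (plen p1) ->
  is_component p2 l (plen p2 - 1) (plen p2) ->
  Rmax eps (2 * L * (s + 1)) <= INR (dX X (vertex p1 (plen p1 - 1)) (vertex p1 (plen p1))) ->
  Rmax eps (2 * L * (s + 1)) <= INR (dX X (vertex p2 (plen p2 - 1)) (vertex p2 (plen p2))) ->
  connected H l p1 (plen p1 - 1) (plen p1) p2 (plen p2 - 1) (plen p2).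
Proof.
  intros Hgeo1 Hgeo2 Hs1 Hs2 Hlast1 Hlast2 Hd1 Hd2.
  destruct (Heprop p1 p2 Hgeo1 Hgeo2 Hs1 Hs2 l _ _ Hlast1) as [i [j Hconn]].
  { exact (Rle_trans _ _ _ (Rmax_l _ _) Hd1). }
  destruct (classic ((i, j) = (plen p2 - 1, plen p2)%nat)) as [Heq|Hne].
  { injection Heq as -> ->. exact Hconn. }
  destruct (classic (same_lcoset (H l) (pend p1) (pend p2))) as [Hends|Hfar].
  { exact (connected_last_edges l (HHsub l) p1 p2 (proj1 Hgeo1) (proj1 Hgeo2)
             Hlast1 Hlast2 Hends). }
  exfalso.
  assert (Hc : is_component p2 l i j) by apply Hconn.
  assert (HPi : same_lcoset (H l) (pend p1) (vertex p2 i)).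
  { apply (connected_lcoset l (HHsub l) _ _ _ _ _ _ _ _ Hconn); destruct Hc; lia. }
  assert (HPj : same_lcoset (H l) (pend p1) (vertex p2 j)).
  { apply (connected_lcoset l (HHsub l) _ _ _ _ _ _ _ _ Hconn); destruct Hc; lia. }
  pose proof (last_edge_dX_le HXsym HXgen L (Rlt_le _ _ HL0) HLprop p2 l i j (pend p1)
                (HHsub l) Hgeo2 Hlast2 Hc Hne HPi HPj Hfar) as Hbound.
  change (vertex p2 (plen p2)) with (pend p2) in Hd2.
  pose proof (Rmax_r eps (2 * L * (s + 1))).
  assert (L * INR (dX X (pend p1) (pend p2)) <= L * s) by (apply Rmult_le_compat_l; lra).
  lra.
Qed.
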